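(* Let $X, Y, Z$ be Polish spaces and let $P: X \rightsquigarrow Y$ be a tight Feller kernel such that each $P(x,\cdot)$ has a continuous density $\rho_x$ with respect to a fixed reference Borel measure on $Y$. Let $\epsilon \in [0,1)$ and let $R \subseteq X \times Z$ and $S \subseteq Y \times Z$ be closed relations. If $P_!^\epsilon R \subseteq S$, then $R \subseteq P^{*,\epsilon} S$.
   Context: Markov kernel, Feller and tight as usual: $P(x,\cdot)$ Borel probability measures, $x \mapsto P(x,A)$ measurable; Feller means $x \mapsto \int\phi\,dP(x,\cdot)$ continuous for bounded continuous $\phi$; tight means for each compact $K \subseteq X$, $\eta>0$ there is compact $L$ with $P(x,L) \ge 1-\eta$ for $x \in K$. The $\epsilon$-highest density region is $\mathrm{supp}_\epsilon(P(x)) = \{y : \rho_x(y) \ge \lambda_\epsilon\}$ with $\lambda_\epsilon = \sup\{\lambda \ge 0 : P(x, \{y : \rho_x(y) \ge \lambda\}) \ge 1-\epsilon\}$. The $\epsilon$-pushforward is $P_!^\epsilon R = \overline{\bigcup_{(x,z) \in R} \mathrm{supp}_\epsilon(P(x)) \times \{z\}} \subseteq Y \times Z$ (closure). The $\epsilon$-pullback is $P^{*,\epsilon} S = \{(x,z) : P(x, S_z) \ge 1-\epsilon\}$ with $S_z = \{y : (y,z) \in S\}$. *)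

From HB Require Import structures.
From mathcomp Require Import all_boot all_order all_algebra.
From mathcomp Require Import all_classical all_reals all_analysis.
Set Implicit Arguments. Unset Strict Implicit. Unset Printing Implicit Defensive.
Import Order.TTheory GRing.Theory Num.Theory numFieldNormedType.Exports.
Local Open Scope classical_set_scope.
Local Open Scope ring_scope.

(* A Polish space: a complete (pseudo)metric space which is Hausdorff
   (so the pseudometric is a genuine metric) and separable. *)
Definition polish_space (R : realType) (T : completePseudoMetricType R) : Prop :=
  hausdorff_space T /\ exists D : set T, countable D /\ dense D.

Definition borel (T : ptopologicalType) := g_sigma_algebraType (@open T).

Section Kernels.
Variables (R : realType) (X Y Z : ptopologicalType).
Variable P : R.-pker (borel X) ~> (borel Y).

Definition feller : Prop :=
  forall phi : Y -> R, continuous phi -> (exists M : R, forall y, `|phi y| <= M) ->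
    continuous (fun x : X => (\int[P x]_y (phi y)%:E)%E).

Definition tight_kernel : Prop :=
  forall K : set X, compact K -> forall eta : R, 0 < eta ->
    exists L : set Y, compact L /\ forall x, K x -> ((1 - eta)%:E <= P x L)%E.

Definition has_densities (mu : {measure set (borel Y) -> \bar R}) (rho : X -> Y -> R)
  : Prop :=
  (forall x y, 0 <= rho x y) /\
  (forall x (A : set (borel Y)), measurable A ->
     P x A = (\int[mu]_(y in A) (rho x y)%:E)%E).

Variable rho : X -> Y -> R.

Definition hdr_level (eps : R) (x : X) : R :=
  sup [set l : R | 0 <= l /\ ((1 - eps)%:E <= P x [set y | (l <= rho x y)%R])%E].

Definition supp_eps (eps : R) (x : X) : set Y :=
  [set y | hdr_level eps x <= rho x y].

Definition eps_pushforward (eps : R) (Rel : set (X * Z)) : set (Y * Z) :=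
  closure [set yz | exists x, Rel (x, yz.2) /\ supp_eps eps x yz.1].

Definition eps_pullback (eps : R) (S : set (Y * Z)) : set (X * Z) :=
  [set xz | ((1 - eps)%:E <= P xz.1 [set y | S (y, xz.2)])%E].

End Kernels.

From HB Require Import structures.
From mathcomp Require Import all_boot all_order all_algebra.
From mathcomp Require Import all_classical all_reals all_analysis.
Import Order.TTheory GRing.Theory Num.Theory numFieldNormedType.Exports.
Local Open Scope classical_set_scope.
Local Open Scope ring_scope.

(* If (x, z) is in Rel then every y in supp_eps(P x) gives (y, z)
   in the eps-pushforward, hence in S; so supp_eps(P x) is contained in the
   section S_z and it suffices that P(x, supp_eps(P x)) >= 1 - eps.  The
   superlevel sets {rho_x >= l} decrease as l increases to lambda_eps, so by
   continuity of the finite measure P x from above, the bound 1 - eps, valid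
   for levels l arbitrarily close to lambda_eps, passes to the limit. *)

Lemma closed_measurable_borel (T : ptopologicalType) (A : set T) :
  closed A -> @measurable _ (borel T) A.
Proof.
move=> cA; rewrite -[A]setCK; apply: measurableC.
by apply: sub_sigma_algebra; exact: closed_openC.
Qed.

Lemma closed_superlevel (R : realType) (T : topologicalType) (f : T -> R) (l : R) :
  continuous f -> closed [set t | l <= f t].
Proof.
by move=> cf; apply: (@preimage_closed _ _ f) (@closed_ge _ l) => t _; exact: cf.
Qed.

Lemma closed_section (T U : topologicalType) (S : set (T * U)) (u : U) :
  closed S -> closed [set t | S (t, u)].
Proof.
move=> cS; apply: (@preimage_closed _ _ (fun t => (t, u))) cS => t _.
by apply: cvg_pair; [exact: cvg_id | exact: cvg_cst].
Qed.

Lemma bigcap_superlevel (R : realType) (T : Type) (f : T -> R) (s : R) :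
  \bigcap_n [set t | s - n.+1%:R^-1 <= f t] = [set t | s <= f t].
Proof.
apply/seteqP; split => t /=; last first.
  by move=> sf n _ /=; apply: le_trans sf; rewrite gerBl.
move=> near_s; apply/ler_addgt0Pr => e e0.
have /= := near_s (Num.Def.truncn e^-1) I; rewrite lerBlDr => /le_trans; apply.
by rewrite lerD2l ltW // invf_plt ?posrE // truncnS_gt.
Qed.

Section superlevel_sup.
Variables (d : measure_display) (T : measurableType d) (R : realType).
Variables (m : {measure set T -> \bar R}) (f : T -> R) (c : \bar R).
Hypotheses (mf : forall l, measurable [set t | l <= f t]) (mfin : (m setT < +oo)%E).

Let levels := [set l : R | 0 <= l /\ (c <= m [set t | (l <= f t)%R])%E].

(* On the junk branch (no supremum) the level is 0, whose superlevel set is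
   everything because f is nonnegative. *)
Lemma le_measure_superlevel_sup : (forall t, 0 <= f t) -> (c <= m setT)%E ->
  (c <= m [set t | (sup levels <= f t)%R])%E.
Proof.
move=> f0 cT; have [hs|nhs] := pselect (has_sup levels); last first.
  rewrite sup_out //; suff -> : [set t | 0 <= f t] = setT by [].
  by apply/seteqP; split=> // t _; exact: f0.
pose F n := [set t | sup levels - n.+1%:R^-1 <= f t].
have F_nonincr : {homo F : n k / (n <= k)%N >-> (k <= n)%O}.
  move=> n k nk; apply/subsetPset => t /=; apply: le_trans.
  by rewrite lerB // lef_pV2 ?posrE // ler_nat.
have F0_fin : (m (F 0%N) < +oo)%E.
  by apply: le_lt_trans mfin; apply: le_measure; rewrite ?inE //; exact: mf.
have mFcap : measurable (\bigcap_n F n) by rewrite bigcap_superlevel.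
have := nonincreasing_cvg_mu F0_fin (fun n => mf _) mFcap F_nonincr.
rewrite bigcap_superlevel => /cvge_to_ge; apply; apply: nearW => n /=.
have [l [_ cl] lt_l] : exists2 l, levels l & sup levels - n.+1%:R^-1 < l.
  by apply: sup_adherent; rewrite ?invr_gt0.
apply: le_trans cl _; apply: le_measure; rewrite ?inE; [exact: mf | exact: mf |].
by move=> t /= lf; apply: le_trans lf; exact: ltW.
Qed.

End superlevel_sup.

Theorem mainTheorem16 (R : realType) (X Y Z : completePseudoMetricType R)
  (polX : polish_space X) (polY : polish_space Y) (polZ : polish_space Z)
  (P : R.-pker (borel X) ~> (borel Y))
  (hfeller : feller P) (htight : tight_kernel P)
  (mu : {measure set (borel Y) -> \bar R}) (rho : X -> Y -> R)
  (hrho_cont : forall x, continuous (rho x))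
  (hdens : has_densities P mu rho)
  (eps : R) (heps0 : 0 <= eps) (heps1 : eps < 1)
  (Rel : set (X * Z)) (S : set (Y * Z)) (hRel : closed Rel) (hS : closed S) :
  eps_pushforward P rho eps Rel `<=` S -> Rel `<=` eps_pullback P eps S.
Proof.
move=> push_sub [x z] Rxz; rewrite /eps_pullback /=.
have supp_sub : supp_eps P rho eps x `<=` [set y | S (y, z)].
  by move=> y supp_y; apply: push_sub; apply: subset_closure; exists x.
have supp_large : ((1 - eps)%:E <= P x (supp_eps P rho eps x))%E.
  apply: le_measure_superlevel_sup.
  - by move=> l; apply: closed_measurable_borel; exact: closed_superlevel.
  - by rewrite prob_kernel ltry.
  - exact: hdens.1.
  - by rewrite prob_kernel lee_fin gerBl.
apply: le_trans supp_large _; apply: le_measure; rewrite ?inE //.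
- by apply: closed_measurable_borel; exact: closed_superlevel (hrho_cont x).
- by apply: closed_measurable_borel; exact: closed_section.
Qed.
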